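(* Let $B',B''\subseteq\widetilde\Sigma^*\setminus\mathring\Sigma^+$ be bases in decomposed form, $B'$ with scaffold $sc'$ and fill $fl'$, $B''$ with scaffold $sc''$ and fill $fl''$. If $B'$ and $B''$ are joinable, then $\mathcal{C}(B')\cup\mathcal{C}(B'')=\mathcal{C}(B'\cup B'')$.
   Context: $\Sigma$ is a finite alphabet, $\mathring\Sigma=\{\mathring a\mid a\in\Sigma\}$ a disjoint (''dotted'') copy, and $\widetilde\Sigma=\Sigma\cup\mathring\Sigma$. The match operation $@$ on letters is: $a@\mathring a=\mathring a@a=a$, $\mathring a@\mathring a=\mathring a$ for $a\in\Sigma$, undefined otherwise. For words $w,w'\in\widetilde\Sigma^n$, $w@w'=(w(1)@w'(1))\cdots(w(n)@w'(n))$ if every letterwise match is defined ($\epsilon@\epsilon=\epsilon$); otherwise (including unequal lengths) undefined. For languages, $B_1@B_2=\{w_1@w_2\mid w_1\in B_1,w_2\in B_2, w_1@w_2\text{ defined}\}$. Define $B^{0@}=B$, $B^{i@}=B^{(i-1)@}@B$, $B^@=\bigcup_{i\ge0}B^{i@}$, and $\mathcal{C}(B)=B^@\cap\Sigma^*$. $B$ is unproductive if $\mathcal{C}(B)=\emptyset$; $(B_1,B_2)$ is unmatchable if $B_1@B_2=\emptyset$. A base $B\subseteq\widetilde\Sigma^*\setminus\mathring\Sigma^+$ is in decomposed form with scaffold $sc$ and fill $fl$ if $B$ is the disjoint union of $sc$ and $fl$, $fl$ is unproductive and $(sc,sc)$ is unmatchable. Two decomposed bases $B',B''$ (scaffolds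 $sc',sc''$, fills $fl',fl''$) are joinable if $B'\cup B''$ is in decomposed form with scaffold $sc'\cup sc''$ and fill $fl'\cup fl''$, and the pairs $(sc',fl'')$ and $(sc'',fl')$ are unmatchable. *)

From mathcomp Require Import all_boot.
Set Implicit Arguments. Unset Strict Implicit. Unset Printing Implicit Defensive.

Section Matching.
Variable Sigma : finType.

(* Letters of widetilde Sigma = Sigma  U  dotted copy of Sigma. *)
Inductive tletter : Type := Plain of Sigma | Dot of Sigma.

Definition is_plain (x : tletter) : bool := if x is Plain _ then true else false.
Definition is_dot (x : tletter) : bool := if x is Dot _ then true else false.

Definition word := seq tletter.
Definition lang := word -> Prop.

Definition match_letter (x y : tletter) : option tletter :=
  match x, y with
  | Plain a, Dot b => if a == b then Some (Plain a) else None
  | Dot a, Plain b => if a == b then Some (Plain a) else None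
  | Dot a, Dot b => if a == b then Some (Dot a) else None
  | Plain _, Plain _ => None
  end.

Fixpoint match_word (w w' : word) : option word :=
  match w, w' with
  | [::], [::] => Some [::]
  | x :: u, y :: u' =>
      match match_letter x y, match_word u u' with
      | Some z, Some r => Some (z :: r)
      | _, _ => None
      end
  | _, _ => None
  end.

Definition lang_match (B1 B2 : lang) : lang :=
  fun w => exists w1 w2, B1 w1 /\ B2 w2 /\ match_word w1 w2 = Some w.

Definition lang_union (B1 B2 : lang) : lang := fun w => B1 w \/ B2 w.

Fixpoint match_pow (B : lang) (i : nat) : lang :=
  match i with
  | 0 => B
  | i'.+1 => lang_match (match_pow B i') B
  end.

Definition match_star (B : lang) : lang := fun w => exists i, match_pow B i w.

Definition cclosure (B : lang) : lang := fun w => match_star B w /\ all is_plain w.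

Definition unproductive (B : lang) : Prop := forall w, ~ cclosure B w.
Definition unmatchable (B1 B2 : lang) : Prop := forall w, ~ lang_match B1 B2 w.

Definition is_base (B : lang) : Prop :=
  forall w, B w -> ~ (w <> [::] /\ all is_dot w).

Definition decomposed (B sc fl : lang) : Prop :=
  [/\ is_base B,
      (forall w, B w <-> sc w \/ fl w),
      (forall w, ~ (sc w /\ fl w)),
      unproductive fl
    & unmatchable sc sc].

Definition joinable (B' sc' fl' B'' sc'' fl'' : lang) : Prop :=
  [/\ decomposed (lang_union B' B'') (lang_union sc' sc'') (lang_union fl' fl''),
      unmatchable sc' fl''
    & unmatchable sc'' fl'].

End Matching.

(* Unfold a word of (B' ∪ B'')^{i@} into its constituents: any word matched
   with the result is matched with every constituent, so the constituents are
   pairwise matchable. Since (sc' ∪ sc'', sc' ∪ sc'') is unmatchable there is at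
   most one scaffold constituent, and joinability forbids an sc'-constituent
   next to an fl''-one (and symmetrically). Hence all constituents lie in B', or
   all in B'', or all in fl' ∪ fl''; the last case produces no plain word. An
   induction on i maintains this trichotomy, remembering for each word the
   languages it can no longer be matched with. *)
From mathcomp Require Import all_boot.

Set Implicit Arguments.
Unset Strict Implicit.
Unset Printing Implicit Defensive.

Section Matchable.
Variable Sigma : finType.
Implicit Types (x y z u : tletter Sigma) (r b c s : word Sigma) (L K : lang Sigma).

Definition matchable r c : bool := isSome (match_word r c).

Definition avoids r K : Prop := forall c, K c -> ~~ matchable r c.

Lemma match_letterC x y : match_letter x y = match_letter y x.
Proof. by case: x => a; case: y => b /=; rewrite ?(eq_sym a b) //; case: eqP => // ->. Qed.

Lemma match_wordC r c : match_word r c = match_word c r.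
Proof. by elim: r c => [|x r IHr] [|y c] //=; rewrite match_letterC IHr. Qed.

Lemma match_word_matchable r b s : match_word r b = Some s -> matchable r b.
Proof. by rewrite /matchable => ->. Qed.

Lemma match_letter_defined x y z u : match_letter x y = Some z ->
  isSome (match_letter z u) -> isSome (match_letter x u) && isSome (match_letter y u).
Proof.
by case: x y u => a [] b [] c //=; case: eqP => // ab [<-] /=; subst; try case: eqP.
Qed.

Lemma matchable_match_word r b s c : match_word r b = Some s ->
  matchable s c -> matchable r c && matchable b c.
Proof.
rewrite /matchable; elim: r b s c => [|x r IHr] [|y b] s [|u c] //=.
- by case=> <-.
- by case: (match_letter x y) (match_word r b) => [?|] [?|] // [<-].
case Exy: (match_letter x y) => [z|] //; case Erb: (match_word r b) => [t|] // [<-] /=.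
case Ezu: (match_letter z u) => [v|] //; case Etc: (match_word t c) => [?|] // _.
move: (match_letter_defined (u := u) Exy) (IHr _ _ c Erb); rewrite Ezu Etc.
move=> /(_ isT) /andP[] + + /(_ isT) /andP[].
by case: (match_letter x u); case: (match_letter y u); case: (match_word r c);
  case: (match_word b c).
Qed.

Lemma avoids_match_word r b s K : match_word r b = Some s ->
  avoids r K \/ avoids b K -> avoids s K.
Proof.
move=> Es [] Hav c /Hav; apply: contra => /(matchable_match_word Es) /andP[] //.
Qed.

Lemma unmatchable_avoids L K r : unmatchable L K -> L r -> avoids r K.
Proof.
move=> HLK Lr c Kc; rewrite /matchable.
by case Erc: (match_word r c) => [s|] //; case: (HLK s); exists r, c.
Qed.

Lemma unmatchableC L K : unmatchable L K -> unmatchable K L.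
Proof.
by move=> HLK w [r [c [Kr [Lc Erc]]]]; apply: (HLK w); exists c, r; rewrite match_wordC.
Qed.

Lemma match_pow_sub L K : (forall w, L w -> K w) ->
  forall i w, match_pow L i w -> match_pow K i w.
Proof.
move=> LK; elim=> [|i IHi] w /=; first exact: LK.
by case=> [r [b [Lr [Lb Erb]]]]; exists r, b; split; [apply: IHi | split; [apply: LK |]].
Qed.

End Matchable.

Section Classification.
Variables (Sigma : finType) (B' sc' fl' B'' sc'' fl'' : lang Sigma).

Definition fill_part i r :=
  [/\ match_pow (lang_union fl' fl'') i r,
      match_pow fl' i r \/ avoids r sc'
    & match_pow fl'' i r \/ avoids r sc''].

Definition anchored (B K : lang Sigma) i r := match_pow B i r /\ avoids r K.

Definition classified i r :=
  [\/ fill_part i r,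
      anchored B' (lang_union sc' (lang_union sc'' fl'')) i r
    | anchored B'' (lang_union sc'' (lang_union sc' fl')) i r].

Hypothesis B'_split : forall w, B' w <-> sc' w \/ fl' w.
Hypothesis sc'_avoids : forall s, sc' s -> avoids s (lang_union sc' (lang_union sc'' fl'')).
Hypothesis fl'_avoids : forall f, fl' f -> avoids f sc''.

Lemma classified_base_l r : B' r -> classified 0 r.
Proof.
case/B'_split => [sc'r | fl'r]; last by constructor 1; split; [left | left | right; apply: fl'_avoids].
by constructor 2; split; [apply/B'_split; left | apply: sc'_avoids].
Qed.

Lemma classified_step_l i r b s : classified i r -> B' b ->
  match_word r b = Some s -> classified i.+1 s.
Proof.
move=> Cr B'b Es; have rb := match_word_matchable Es.
have sub_fl' := match_pow_sub (fun w fl'w => proj2 (B'_split w) (or_intror fl'w)).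
case: Cr => [[Fr fl'r fl''r] | [B'r avr] | [B''r avr]]; case/B'_split: B'b => [sc'b | fl'b].
- constructor 2; split; last by apply: avoids_match_word Es _; right; apply: sc'_avoids.
  case: fl'r => [fl'r | avr]; last by move: (avr b sc'b); rewrite rb.
  by exists r, b; split; [apply: sub_fl' | split=> //; apply/B'_split; left].
- constructor 1; split.
  + by exists r, b; split=> //; split=> //; left.
  + case: fl'r => [fl'r | avr]; first by left; exists r, b.
    by right; apply: avoids_match_word Es _; left.
  + by right; apply: avoids_match_word Es _; right; apply: fl'_avoids.
- by move: (avr b (or_introl sc'b)); rewrite rb.
- constructor 2; split; last by apply: avoids_match_word Es _; left.
  by exists r, b; split=> //; split=> //; apply/B'_split; right.
- by move: (avr b (or_intror (or_introl sc'b))); rewrite rb.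
- by move: (avr b (or_intror (or_intror fl'b))); rewrite rb.
Qed.

End Classification.

Lemma classified_swap (Sigma : finType) (B' sc' fl' B'' sc'' fl'' : lang Sigma) i r :
  classified B' sc' fl' B'' sc'' fl'' i r -> classified B'' sc'' fl'' B' sc' fl' i r.
Proof.
case=> [[Fr fl'r fl''r] | A' | A'']; [constructor 1 | constructor 3 | constructor 2] => //.
by split=> //; apply: match_pow_sub Fr => w [] ?; [right | left].
Qed.

Lemma match_pow_union_classified (Sigma : finType) (B' sc' fl' B'' sc'' fl'' : lang Sigma) :
  (forall w, B' w <-> sc' w \/ fl' w) ->
  (forall w, B'' w <-> sc'' w \/ fl'' w) ->
  (forall s, sc' s -> avoids s (lang_union sc' (lang_union sc'' fl''))) ->
  (forall s, sc'' s -> avoids s (lang_union sc'' (lang_union sc' fl'))) ->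
  (forall f, fl' f -> avoids f sc'') ->
  (forall f, fl'' f -> avoids f sc') ->
  forall i r, match_pow (lang_union B' B'') i r -> classified B' sc' fl' B'' sc'' fl'' i r.
Proof.
move=> B'_split B''_split sc'_av sc''_av fl'_av fl''_av.
elim=> [|i IHi] r /=.
  case=> [B'r | B''r]; first exact: classified_base_l B'r.
  by apply: classified_swap; apply: classified_base_l B''r.
case=> [r0 [b [Ur0 [[B'b | B''b] Eb]]]]; first exact: classified_step_l (IHi _ Ur0) B'b Eb.
by apply: classified_swap;
  apply: classified_step_l (classified_swap (IHi _ Ur0)) B''b Eb.
Qed.

Theorem theorem1 (Sigma : finType) (B' sc' fl' B'' sc'' fl'' : lang Sigma) :
  decomposed B' sc' fl' ->
  decomposed B'' sc'' fl'' ->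
  joinable B' sc' fl' B'' sc'' fl'' ->
  forall w : word Sigma,
    lang_union (cclosure B') (cclosure B'') w <-> cclosure (lang_union B' B'') w.
Proof.
move=> [_ B'_split _ _ _] [_ B''_split _ _ _] [[_ _ _ fl_unprod sc_sc] sc'_fl'' sc''_fl'] w.
split.
  by case=> [] [[i Hi] plain]; split=> //; exists i; apply: match_pow_sub Hi => v; [left | right].
case=> [[i Hi] plain].
have sc'_av s : sc' s -> avoids s (lang_union sc' (lang_union sc'' fl'')).
  move=> sc's c [sc'c | [sc''c | fl''c]]; last exact: unmatchable_avoids sc'_fl'' sc's c fl''c.
    exact: unmatchable_avoids sc_sc (or_introl sc's) c (or_introl sc'c).
  exact: unmatchable_avoids sc_sc (or_introl sc's) c (or_intror sc''c).
have sc''_av s : sc'' s -> avoids s (lang_union sc'' (lang_union sc' fl')).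
  move=> sc''s c [sc''c | [sc'c | fl'c]]; last exact: unmatchable_avoids sc''_fl' sc''s c fl'c.
    exact: unmatchable_avoids sc_sc (or_intror sc''s) c (or_intror sc''c).
  exact: unmatchable_avoids sc_sc (or_intror sc''s) c (or_introl sc'c).
have [[Fw _ _] | [B'w _] | [B''w _]] :=
  match_pow_union_classified B'_split B''_split sc'_av sc''_av
    (fun f => unmatchable_avoids (unmatchableC sc''_fl'))
    (fun f => unmatchable_avoids (unmatchableC sc'_fl'')) Hi.
- by case: (fl_unprod w); split=> //; exists i.
- by left; split=> //; exists i.
- by right; split=> //; exists i.
Qed.
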